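(* Let $m\in\mathbb{N}$, $A=\langle a\rangle\le\mathrm{Sym}(3)$ with $a=(1\,2\,3)$, $B=(\mathbb{Z}/3\mathbb{Z})^m$, and let $\omega=\omega_0\omega_1\dots$ be a sequence of epimorphisms $\omega_i\colon B\to A$ with $\bigcap_{i\ge k}\ker(\omega_i)=\{1\}$ for all $k\in\mathbb{N}$. Let $g\in G_\omega$ with $|g|_\omega=n\ge 1$, written as $g=\beta_1^{a^{c_1}}\beta_2^{a^{c_2}}\cdots\beta_n^{a^{c_n}}a^{s}$ with $s\in\mathbb{Z}/3\mathbb{Z}$, $\beta\colon\{1,\dots,n\}\to B_\omega$ and $c\colon\{1,\dots,n\}\to\mathbb{Z}/3\mathbb{Z}$. If $g\in\mathcal{I}_\infty^\omega$, then there exists $m_c\in\{1,2,\dots,n\}$ such that for all $k\in\{1,\dots,n-1\}$, $c_{k+1}-c_k=2$ if $k<m_c$ and $c_{k+1}-c_k=1$ if $k\ge m_c$.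
   Context: $T_3$ is the $3$-regular rooted tree; elements of $\mathrm{Sym}(3)$ act as rooted automorphisms $\tau(xw)=\tau(x)w$; for $g$ fixing the first level, $g=(g_1,g_2,g_3)$ lists the restrictions of $g$ to the three subtrees below the root, and every automorphism is uniquely $(g_1,g_2,g_3)\tau$ with $\tau\in\mathrm{Sym}(3)$. For $b\in B_\omega$ and $i\in\mathbb{Z}/3\mathbb{Z}$, $b^{a^i}=a^iba^{-i}$. Let $\sigma$ be the left shift on sequences. Define recursively $\beta_\omega\colon B\to\mathrm{Aut}(T_3)$ by $\beta_\omega(b)=(\omega_0(b),1,\beta_{\sigma(\omega)}(b))$, $B_\omega=\beta_\omega(B)$, $G_\omega=\langle A,B_\omega\rangle$. The word pseudonorm $|\cdot|_\omega$ on $G_\omega$ gives length $0$ to elements of $A$ and length $1$ to nontrivial elements of $B_\omega$ ($|g|_\omega$ = minimal total length of an expression of $g$ as a product of such generators). Incompressible elements: $\mathcal{I}_0^{\sigma^\nu(\omega)}=G_{\sigma^\nu(\omega)}$; $\mathcal{I}_k^{\sigma^\nu(\omega)}$ is the set of $g=(g_1,g_2,g_3)\tau\in G_{\sigma^\nu(\omega)}$ with $g_i\in\mathcal{I}_{k-1}^{\sigma^{\nu+1}(\omega)}$ and $\sum_i|g_i|_{\sigma^{\nu+1}(\omega)}=|g|_{\sigma^\nu(\omega)}$; $\mathcal{I}_\infty^\omega=\bigcap_{k\ge1}\mathcal{I}_k^\omega$. *)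

From mathcomp Require Import all_boot all_order all_algebra all_fingroup.
From Stdlib Require Import ClassicalEpsilon.
Set Implicit Arguments. Unset Strict Implicit. Unset Printing Implicit Defensive.
Import GRing.Theory.
Local Open Scope ring_scope.

(* Vertices of the 3-regular rooted tree T_3: finite words over the alphabet
   {1,2,3}, encoded as 'Z_3 = {0,1,2} (letter i+1 is encoded by i). *)
Definition vtx := seq 'Z_3.

(* Automorphisms are represented as functions vtx -> vtx; products are
   compositions with LEFT actions: (g h) w = g (h w). *)
Definition fid : vtx -> vtx := fun w => w.
Definition prodw (fs : seq (vtx -> vtx)) : vtx -> vtx :=
  foldr (fun f acc => f \o acc) fid fs.

(* The group A = <a>, a = (1 2 3): the element a^k (k : 'Z_3) is the rooted
   automorphism x w |-> (x + k) w. *)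
Definition apow (k : 'Z_3) (w : vtx) : vtx :=
  if w is x :: w' then (x + k) :: w' else [::].

(* b^{a^i} = a^i b a^{-i} *)
Definition conjA (i : 'Z_3) (f : vtx -> vtx) : vtx -> vtx :=
  apow i \o f \o apow (- i).

(* B = (Z/3Z)^m, written additively as row vectors.  A sequence
   omega = omega_0 omega_1 ... of maps B -> A is encoded as
   omega : nat -> B -> 'Z_3, where the value k stands for a^k. *)
Definition Bm (m : nat) := 'rV['Z_3]_m.
Definition seqom (m : nat) := nat -> Bm m -> 'Z_3.

Definition shift m (om : seqom m) : seqom m := fun i => om i.+1.

(* beta_omega(b) = (omega_0(b), 1, beta_{sigma omega}(b)) *)
Fixpoint beta m (om : seqom m) (b : Bm m) (w : vtx) {struct w} : vtx :=
  match w with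
  | [::] => [::]
  | y :: w' =>
      if y == 0 then y :: apow (om 0%N b) w'
      else if y == 1 then y :: w'
      else y :: beta (shift om) b w'
  end.

(* Generators of G_omega = <A, B_omega>: elements of A (inl k = a^k) and
   elements of B_omega (inr b = beta_omega(b)). *)
Definition gen m := ('Z_3 + Bm m)%type.

Definition evalgen m (om : seqom m) (x : gen m) : vtx -> vtx :=
  match x with inl k => apow k | inr b => beta om b end.

Definition evalw m (om : seqom m) (l : seq (gen m)) : vtx -> vtx :=
  prodw (map (evalgen om) l).

Definition gencost m (om : seqom m) (x : gen m) : nat :=
  match x with
  | inl _ => 0%N
  | inr b => if excluded_middle_informative (beta om b =1 fid) then 0%N else 1%N
  end.

Definition costw m (om : seqom m) (l : seq (gen m)) : nat :=
  sumn (map (gencost om) l).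

Definition inG m (om : seqom m) (g : vtx -> vtx) : Prop :=
  exists l, evalw om l =1 g.

Definition wnorm m (om : seqom m) (g : vtx -> vtx) (n : nat) : Prop :=
  (exists l, evalw om l =1 g /\ costw om l = n) /\
  (forall l, evalw om l =1 g -> (n <= costw om l)%N).

(* Incompressible elements I_k^omega.  g = (g_1,g_2,g_3) tau means
   g (x w) = tau(x) g_{tau(x)}(w). *)
Fixpoint Icomp m (k : nat) (om : seqom m) (g : vtx -> vtx) : Prop :=
  match k with
  | 0%N => inG om g
  | k'.+1 =>
      inG om g /\
      exists (gs : 'Z_3 -> vtx -> vtx) (tau : {perm 'Z_3})
             (ns : 'Z_3 -> nat) (n : nat),
        (forall x w, g (x :: w) = tau x :: gs (tau x) w) /\
        (forall i, Icomp k' (shift om) (gs i)) /\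
        (forall i, wnorm (shift om) (gs i) (ns i)) /\
        wnorm om g n /\
        (\sum_(i : 'Z_3) ns i)%N = n
  end.

Definition Iinf m (om : seqom m) (g : vtx -> vtx) : Prop :=
  forall k, (1 <= k)%N -> Icomp k om g.

From mathcomp Require Import all_boot all_order all_algebra all_fingroup.
From mathcomp Require Import zify.
Set Implicit Arguments. Unset Strict Implicit. Unset Printing Implicit Defensive.
Import GRing.Theory.
Local Open Scope ring_scope.

(** The sections of
    [g] at the three first-level vertices are read off letter by letter from
    the decomposition of [g]: at the vertex [p], the factor [b_k^(a^(c_k))]
    contributes a letter of [B] exactly when [p - c_k = 2], and nothing when
    [p - c_k = 1].  These three section words have total cost at most [n],
    so [g] being in [I_1] forces each of them to be geodesic and each [b_k] to
    be nontrivial one level down.  A geodesic word cannot contain two adjacent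
    nontrivial letters of [B], since they could be merged into one.  At the
    vertex [c_k + 2] this excludes [c_(k+1) = c_k] (two adjacent letters), and
    it excludes the step [1] followed by the step [2] (the middle factor
    contributes nothing).  Hence the steps [c_(k+1) - c_k] lie in [{1, 2}], and
    once a step is [1] all the following ones are [1]. *)

Lemma Z3_cases (y : 'Z_3) : [\/ y = 0, y = 1 | y = 2].
Proof.
case: y => -[|[|[|//]]] ? /=;
  [constructor 1|constructor 2|constructor 3]; exact/val_inj.
Qed.

Lemma sum_le1_eq_size (I : eqType) (e : I -> nat) (l : seq I) :
  (forall i, e i <= 1)%N -> (\sum_(i <- l) e i = size l)%N ->
  {in l, forall i, e i = 1%N}.
Proof.
move=> le1; elim: l => //= j l IH; rewrite big_cons => sum_eq i.
have sum_le : (\sum_(i <- l) e i <= size l)%N.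
  by rewrite -sum1_size; apply: leq_sum => ? _; apply: le1.
rewrite in_cons => /orP[/eqP ->|il]; first by have := le1 j; lia.
by apply: IH il; have := le1 j; lia.
Qed.

Lemma threshold_of_upward_closed (P : pred nat) (n : nat) : (1 <= n)%N ->
  (forall k, (1 <= k)%N -> (k.+2 <= n)%N -> P k -> P k.+1) ->
  exists mc : nat, (1 <= mc <= n)%N /\
    forall k : nat, (1 <= k <= n.-1)%N -> ((k < mc)%N -> ~~ P k) /\ ((mc <= k)%N -> P k).
Proof.
move=> n_ge1 P_up.
pose Q k := [&& (1 <= k)%N, (k < n)%N & P k] || (k == n).
have exQ : exists k, Q k by exists n; rewrite /Q eqxx orbT.
have [mc Qmc mc_min] := ex_minnP exQ.
have mc_le_n : (mc <= n)%N by apply: mc_min; rewrite /Q eqxx orbT.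
exists mc; split.
  by apply/andP; split => //; case/orP: Qmc => [/and3P[]|/eqP ->].
move=> k /andP[k_ge1 k_le]; split=> [k_lt_mc|mc_le_k].
  by apply/negP => Pk; have := mc_min k; rewrite /Q k_ge1 Pk /=; lia.
have /and3P[mc_ge1 mc_lt_n Pmc] : [&& (1 <= mc)%N, (mc < n)%N & P mc].
  by case/orP: Qmc => // /eqP mc_n; lia.
elim: k mc_le_k k_ge1 k_le => [|k IH]; first by lia.
rewrite leq_eqVlt => /orP[/eqP <- //|mc_le_k] _ k_le.
by apply: P_up; [lia|lia|apply: IH; lia].
Qed.

Lemma evalw_cat m (om : seqom m) l1 l2 w :
  evalw om (l1 ++ l2) w = evalw om l1 (evalw om l2 w).
Proof. by elim: l1 => //= x l1 IH; rewrite /evalw /= in IH *; rewrite IH. Qed.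

Lemma costw_cat m (om : seqom m) l1 l2 :
  costw om (l1 ++ l2) = (costw om l1 + costw om l2)%N.
Proof. by rewrite /costw map_cat sumn_cat. Qed.

Lemma costw_flatten m (om : seqom m) (I : Type) (f : I -> seq (gen m)) l :
  costw om (flatten (map f l)) = (\sum_(i <- l) costw om (f i))%N.
Proof. by elim: l => [|i l IH]; rewrite ?big_nil ?big_cons //= costw_cat IH. Qed.

Lemma gencost_le1 m (om : seqom m) x : (gencost om x <= 1)%N.
Proof. by case: x => //= y; case: ClassicalEpsilon.excluded_middle_informative. Qed.

Lemma apow_comp (k1 k2 : 'Z_3) w : apow k1 (apow k2 w) = apow (k2 + k1) w.
Proof. by case: w => //= x w; rewrite addrA. Qed.

Lemma beta_add m (om : seqom m) :
  (forall i (x y : Bm m), om i (x + y) = om i x + om i y) ->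
  forall x y w, beta om (x + y) w = beta om x (beta om y w).
Proof.
move=> om_morph x y w; elim: w om om_morph => //= z w IH om om_morph.
case: ifP => [z0|z_neq0]; first by rewrite /= z0 apow_comp om_morph addrC.
case: ifP => z1; rewrite /= ?z_neq0 ?z1 //.
by rewrite IH // => i; apply: om_morph.
Qed.

Lemma wnorm_uniq m (om : seqom m) f n1 n2 : wnorm om f n1 -> wnorm om f n2 -> n1 = n2.
Proof.
move=> [[l1 [E1 <-]] min1] [[l2 [E2 <-]] min2].
by apply/eqP; rewrite eqn_leq min1 // min2.
Qed.

Lemma eq_wnorm m (om : seqom m) f1 f2 n : f1 =1 f2 -> wnorm om f1 n -> wnorm om f2 n.
Proof.
move=> E [[l [El cost_l]] min_n]; split; first by exists l; split=> // w; rewrite El E.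
by move=> l' El'; apply: min_n => w; rewrite El' E.
Qed.

Definition geodesic m (om : seqom m) (l : seq (gen m)) : Prop :=
  wnorm om (evalw om l) (costw om l).

Lemma geodesic_adjacent_beta m (om : seqom m) u (x y : Bm m) v :
  (forall i (x y : Bm m), om i (x + y) = om i x + om i y) ->
  geodesic om (u ++ inr x :: inr y :: v) ->
  (gencost om (inr x) + gencost om (inr y) <= 1)%N.
Proof.
move=> om_morph [_ min_l].
have merged : evalw om (u ++ inr (x + y) :: v) =1 evalw om (u ++ inr x :: inr y :: v).
  by move=> w; rewrite !evalw_cat /evalw /= beta_add.
have := min_l _ merged; have := gencost_le1 om (inr (x + y)).
by rewrite !costw_cat /costw /=; lia.
Qed.

Definition conj_section m (om : seqom m) (c : 'Z_3) (b : Bm m) (p : 'Z_3) :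
    seq (gen m) :=
  if p - c == 0 then [:: inl (om 0%N b)] else if p - c == 1 then [::] else [:: inr b].

Lemma conjA_beta_cons m (om : seqom m) c b p w :
  conjA c (beta om b) (p :: w) = p :: evalw (shift om) (conj_section om c b p) w.
Proof. by rewrite /conjA /conj_section /=; do 2?case: ifP => _; rewrite /= subrK. Qed.

Lemma conj_section_add1 m (om : seqom m) c b : conj_section om c b (c + 1) = [::].
Proof. by rewrite /conj_section (addrC c) addrK. Qed.

Lemma conj_section_add2 m (om : seqom m) c b : conj_section om c b (c + 2) = [:: inr b].
Proof. by rewrite /conj_section (addrC c) addrK. Qed.

Lemma sum_costw_conj_section m (om : seqom m) c b :
  (\sum_(p : 'Z_3) costw (shift om) (conj_section om c b p))%N =
  gencost (shift om) (inr b).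
Proof.
rewrite (bigD1 (c + 2)) //= conj_section_add2 big1 ?addn0; first by rewrite /costw /= addn0.
move=> p p_neq; rewrite /conj_section.
have [|->|p_eq] := Z3_cases (p - c); [by move=> -> | by [] |].
by move: p_neq; rewrite -p_eq addrC subrK eqxx.
Qed.

Lemma iota_window n k r : (1 <= k)%N -> (k + r <= n.+1)%N ->
  iota 1 n = iota 1 k.-1 ++ iota k r ++ iota (k + r) (n.+1 - (k + r)).
Proof.
move=> k_ge1 kr_le; rewrite -iotaD.
have -> : iota k (r + (n.+1 - (k + r))) = iota (1 + k.-1) (n - k.-1).
  by congr iota; lia.
by rewrite -iotaD; congr iota; lia.
Qed.

Section ConjugateProducts.

Variables (m : nat) (om : seqom m) (b : nat -> Bm m) (c : nat -> 'Z_3).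

Definition section_word (l : seq nat) (p : 'Z_3) : seq (gen m) :=
  flatten [seq conj_section om (c i) (b i) p | i <- l].

Lemma section_word_cat l1 l2 p :
  section_word (l1 ++ l2) p = section_word l1 p ++ section_word l2 p.
Proof. by rewrite /section_word map_cat flatten_cat. Qed.

Lemma section_word_cons i l p :
  section_word (i :: l) p = conj_section om (c i) (b i) p ++ section_word l p.
Proof. by []. Qed.

Lemma prodw_conjA_beta_cons l p w :
  prodw [seq conjA (c i) (beta om (b i)) | i <- l] (p :: w) =
  p :: evalw (shift om) (section_word l p) w.
Proof.
elim: l => //= i l IH.
by rewrite IH conjA_beta_cons -evalw_cat.
Qed.

Lemma sum_costw_section_word l :
  (\sum_(p : 'Z_3) costw (shift om) (section_word l p))%N =
  (\sum_(i <- l) gencost (shift om) (inr (b i)))%N.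
Proof.
rewrite (eq_bigr (fun p => \sum_(i <- l) costw (shift om) (conj_section om (c i) (b i) p))%N);
  last by move=> p _; apply: costw_flatten.
by rewrite exchange_big; apply: eq_bigr => i _; apply: sum_costw_conj_section.
Qed.

Variables (n : nat) (s : 'Z_3) (g : vtx -> vtx).
Hypothesis om_morph : forall i (x y : Bm m), om i (x + y) = om i x + om i y.
Hypothesis g_dec :
  g =1 prodw [seq conjA (c i) (beta om (b i)) | i <- iota 1 n] \o apow s.
Hypothesis gn : wnorm om g n.
Hypothesis g_I1 : Icomp 1 om g.

Local Notation word p := (section_word (iota 1 n) p).

Lemma Icomp1_section_norms : exists ns : 'Z_3 -> nat,
  (forall p, wnorm (shift om) (evalw (shift om) (word p)) (ns p)) /\
  (\sum_(p : 'Z_3) ns p)%N = n.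
Proof.
have [_ [gs [tau [ns [n' [g_cons [_ [gs_ns [gn' sum_ns]]]]]]]]] := g_I1.
exists ns; split; last by rewrite sum_ns (wnorm_uniq gn' gn).
move=> p; apply: eq_wnorm (gs_ns p) => w.
have := g_cons (p - s) w; rewrite g_dec /= prodw_conjA_beta_cons subrK.
by case=> <- ->.
Qed.

Lemma geodesic_section_words :
  (forall p, geodesic (shift om) (word p)) /\
  (\sum_(p : 'Z_3) costw (shift om) (word p))%N = n.
Proof.
have [ns [ns_norm sum_ns]] := Icomp1_section_norms.
have ns_le p : (ns p <= costw (shift om) (word p))%N.
  by apply: (ns_norm p).2.
have sum_le : (\sum_(p : 'Z_3) costw (shift om) (word p) <= n)%N.
  rewrite sum_costw_section_word -[X in (_ <= X)%N](size_iota 1) -sum1_size.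
  by apply: leq_sum => i _; apply: gencost_le1.
have /leqif_sum sum_leif : forall p : 'Z_3, predT p ->
    (ns p <= costw (shift om) (word p) ?= iff
     (ns p == costw (shift om) (word p)))%N.
  by move=> p _; apply/leqif_eq/ns_le.
have /forall_inP ns_eq : [forall (p | predT p), ns p == costw (shift om) (word p)].
  by rewrite -(sum_leif).2 eqn_leq (sum_leif).1 sum_ns sum_le.
split=> [p|]; first by rewrite /geodesic -(eqP (ns_eq p isT)).
by rewrite -[RHS]sum_ns; apply: eq_bigr => p _; rewrite (eqP (ns_eq p isT)).
Qed.

Lemma gencost_beta_eq1 i : i \in iota 1 n -> gencost (shift om) (inr (b i)) = 1%N.
Proof.
move: i; apply: (@sum_le1_eq_size _ (fun i => gencost (shift om) (inr (b i)))).
  by move=> i; apply: gencost_le1.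
by rewrite -sum_costw_section_word geodesic_section_words.2 size_iota.
Qed.

Lemma section_word_no_adjacent_beta p u v x y :
  word p = u ++ inr (b x) :: inr (b y) :: v ->
  x \in iota 1 n -> y \in iota 1 n -> False.
Proof.
move=> W_eq xn yn; have := geodesic_section_words.1 p.
rewrite W_eq => /(geodesic_adjacent_beta (fun i => om_morph i.+1)).
by rewrite !gencost_beta_eq1.
Qed.

Lemma step_neq0 k : (1 <= k < n)%N -> c k.+1 - c k != 0.
Proof.
move=> /andP[k_ge1 k_lt_n]; rewrite subr_eq0; apply/eqP => c_eq.
apply: (section_word_no_adjacent_beta (p := c k + 2) (x := k) (y := k.+1)).
- rewrite (@iota_window n k 2) // ?section_word_cat; last by lia.
  by rewrite /= !section_word_cons conj_section_add2 c_eq conj_section_add2.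
- by rewrite mem_iota; lia.
- by rewrite mem_iota; lia.
Qed.

Lemma step1_then_step1 k : (1 <= k)%N -> (k.+2 <= n)%N ->
  c k.+1 - c k = 1 -> c k.+2 - c k.+1 = 1.
Proof.
move=> k_ge1 k2_le step1.
have [step0|//|step2] := Z3_cases (c k.+2 - c k.+1).
  by move: (@step_neq0 k.+1); rewrite step0 eqxx => /implyP; lia.
have c1 : c k.+1 = c k + 1 by rewrite -step1 addrC subrK.
have c2 : c k.+2 = c k.
  rewrite -(subrK (c k.+1) (c k.+2)) step2 c1 [c k + 1]addrC !addrA.
  by rewrite [1 + 1 + 1](_ : _ = 0) ?add0r //; apply/val_inj.
have skip : conj_section om (c k.+1) (b k.+1) (c k + 2) = [::].
  rewrite c1 [c k + 2](_ : _ = c k + 1 + 1) ?conj_section_add1 //.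
  by rewrite -addrA; congr (_ + _); apply/val_inj.
exfalso; apply: (section_word_no_adjacent_beta (p := c k + 2) (x := k) (y := k.+2)).
- rewrite (@iota_window n k 3) // ?section_word_cat; last by lia.
  by rewrite /= !section_word_cons skip c2 !conj_section_add2.
- by rewrite mem_iota; lia.
- by rewrite mem_iota; lia.
Qed.

End ConjugateProducts.

Theorem mainTheorem3 (m : nat) (om : seqom m)
  (om_morph : forall i (x y : Bm m), om i (x + y) = om i x + om i y)
  (om_surj : forall i (z : 'Z_3), exists x : Bm m, om i x = z)
  (om_ker : forall (k : nat) (x : Bm m),
      (forall i : nat, (k <= i)%N -> om i x = 0) -> x = 0)
  (g : vtx -> vtx) (n : nat) (gG : inG om g) (gn : wnorm om g n)
  (n_ge1 : (1 <= n)%N)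
  (s : 'Z_3) (b : nat -> Bm m) (c : nat -> 'Z_3)
  (g_dec : g =1 prodw [seq conjA (c i) (beta om (b i)) | i <- iota 1 n] \o apow s)
  (g_inf : Iinf om g) :
  exists mc : nat, (1 <= mc <= n)%N /\
    forall k : nat, (1 <= k <= n.-1)%N ->
      ((k < mc)%N -> c k.+1 - c k = 2) /\ ((mc <= k)%N -> c k.+1 - c k = 1).
Proof.
have g_I1 := g_inf 1%N (leqnn 1).
have step_up k : (1 <= k)%N -> (k.+2 <= n)%N ->
    c k.+1 - c k == 1 -> c k.+2 - c k.+1 == 1.
  move=> k_ge1 k2_le /eqP step1; apply/eqP.
  exact: (step1_then_step1 om_morph g_dec gn g_I1).
have [mc [mc_range mc_thr]] := threshold_of_upward_closed n_ge1 step_up.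
exists mc; split=> // k k_range; have [before after] := mc_thr k k_range.
split=> [k_lt_mc|/after/eqP //].
have step_neq0_k : c k.+1 - c k != 0.
  by apply: (step_neq0 om_morph g_dec gn g_I1); move: k_range; lia.
move: step_neq0_k (before k_lt_mc).
have [y0|y1|//] := Z3_cases (c k.+1 - c k).
  by rewrite y0 eqxx.
by rewrite y1 eqxx.
Qed.
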